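(* Let $q$ be a query program, $P$ a partial model, $\mathcal{T}$ a theory, and $P',\mathcal{T}'$ the partial model and theory produced by the witness-generation construction. If $M=\langle O_M,I_M,\mathcal{S}_M\rangle\in\mathit{solutions}(P,\mathcal{T})$, then there exist a renaming of variables $\mathit{rename}:\mathcal{X}\to\mathcal{X}$ stationary with respect to $\mathcal{T}$ and a model $M'\in\mathit{solutions}(P',\mathcal{T}')$ such that $M^{\mathit{rename}}\succcurlyeq M'$ and $\mathit{DS}_M(M)=\mathit{DS}_M(M')=g_{\mathrm{witness}}(M')$, where $\mathit{DS}_M(N)=\max_{k\vDash\mathcal{S}_{\mathrm{IPET}}\cup\mathcal{S}_{\mathrm{flow}}(N)}g_{\mathrm{IPET}}(k)$ and $g_{\mathrm{witness}}(N)=\max_{k\vDash\mathcal{S}_N}g_{\mathrm{IPET}}(k)$ for concrete $N$.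
   Context: Linear systems. Fix a large finite reserve $\mathcal{X}$ of integer variables. A system of linear inequalities $\mathcal{S}$ is a finite set of inequalities $\sum_j a_{ij}x_j\le y_i$ (equations are written as pairs of inequalities). A valuation $k:\mathcal{X}\to\mathbb{Z}$ is a solution of $\mathcal{S}$ ($k\vDash\mathcal{S}$) if it satisfies all of them; $\mathcal{S}_1\vDash\mathcal{S}_2$ means every solution of $\mathcal{S}_1$ is a solution of $\mathcal{S}_2$. Models. A metamodel is a signature $\Sigma$ of unary class symbols, binary relation symbols, a unary existence symbol $\varepsilon$ and a binary equality symbol $\sim$. A (scoped) partial model $P=\langle O_P,I_P,\mathcal{S}_P\rangle$ consists of a finite object set $O_P$, a 3-valued interpretation $I_P(\sigma):O_P^{\mathrm{arity}(\sigma)}\to\{0,1,\tfrac12\}$ for each $\sigma\in\Sigma$ ($\tfrac12$ = unknown), and a scope $\mathcal{S}_P$ (a system of linear inequalities). $P$ is concrete if all values are $0$ or $1$, $I_P(\varepsilon)(o)=1$ for all $o$, $I_P(\sim)(o_1,o_2)=1$ iff $o_1=o_2$, and $\mathcal{S}_P$ has a solution. Refinement: for $\mathit{abs}:O_Q\to O_P$, $P\succcurlyeq_{\mathit{abs}}Q$ holds if for all $\sigma$ and tuples $\bar q$, $I_P(\sigma)(\mathit{abs}(\bar q))$ is $\tfrac12$ or equals $I_Q(\sigma)(\bar q)$; every $p$ with $I_P(\varepsilon)(p)=1$ has a preimage under $\mathit{abs}$; and $\mathcal{S}_Q\vDash\mathcal{S}_P$. $P\succcurlyeq Q$ if $P\succcurlyeq_{\mathit{abs}}Q$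 for some $\mathit{abs}$. For a first-order predicate $\varphi$ over $\Sigma$ with free variables $v_1,\dots,v_n$ and a concrete model $M$, $M\#\varphi$ is the number of maps $Z:\{v_1,\dots,v_n\}\to O_M$ under which $\varphi$ is true in $M$. A theory $\mathcal{T}=\langle\Phi,r\rangle$ is a finite set $\Phi$ of predicates with a map $r:\Phi\to\mathcal{X}$; a concrete $M$ is compatible with it ($M\vDash\mathcal{T}$) if $\mathcal{S}_M\vDash r(\varphi)=M\#\varphi$ for all $\varphi\in\Phi$. $\mathit{solutions}(P,\mathcal{T})$ is the set of concrete models $M$ with $P\succcurlyeq M$ and $M\vDash\mathcal{T}$. Renaming. A map $\mathit{rename}:\mathcal{X}\to\mathcal{X}$ is a renaming of variables if it is bijective; it is stationary with respect to $\mathcal{T}=\langle\Phi,r\rangle$ if $\mathit{rename}(r(\varphi))=r(\varphi)$ for all $\varphi\in\Phi$. For a partial model $P=\langle O_P,I_P,\mathcal{S}_P\rangle$, its renaming is $P^{\mathit{rename}}=\langle O_P,I_P,\mathcal{S}_P^{\mathit{rename}}\rangle$, where $\mathcal{S}_P^{\mathit{rename}}$ is obtained from $\mathcal{S}_P$ by replacing each variable $x$ with $\mathit{rename}(x)$. Program and IPET. $q$ is a query program generated from a graph-query search plan: structured code of nested for-loops and if-statements, where each for-loop implements an extend constraint ($C(v)$ with $v$ new, or $R(v_i,v_j)$ with $v_j$ new; it iterates over all candidate bindings of the new variable) and each if-statement implements a check constraint ($C(v_i)$, $R(v_i,v_j)$, $v_i=v_j$, or their negations, over bound variables). $\mathit{BB}$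 is its set of basic blocks; its weighted CFG is $\langle V,E,s,t,w,\mathit{tr}\rangle$ with edges $E\subseteq V\times V$, start/end $s,t$, weights $w:E\to\mathbb{N}$, traceability $\mathit{tr}:V\to\mathit{BB}$. $f:E\to\mathcal{X}$ assigns distinct variables to edges. $\mathcal{S}_{\mathrm{IPET}}$ contains $\sum_{e=\langle s,n\rangle}f(e)=1$, $\sum_{e=\langle n,t\rangle}f(e)=1$, flow conservation at every $n\ne s,t$, $-f(e)\le0$, and possibly further low-level flow facts. $g_{\mathrm{IPET}}(k)=\sum_{e\in E}w(e)k(f(e))$. Standing assumption (IPET safety): for every execution of $q$ along CFG path $\pi$, the valuation $k_\pi(f(e))=\pi\#e$ satisfies $\mathcal{S}_{\mathrm{IPET}}$ and the execution time is at most $g_{\mathrm{IPET}}(k_\pi)$. Basic block predicates. For $bb\in\mathit{BB}$, $\psi_{bb}$ is the conjunction of the atomic predicates of all for/if statements enclosing $bb$ (extend atoms without their existential quantifier; check literals as-is); $\psi_{bb}=\mathrm{true}$ if none. If $bb$ is the header of loop $\ell$, also $\psi'_{bb}=\psi_{bb}\wedge(\text{atom of }\ell)$. $\Psi$ is the set of all these predicates. By the structure of the generated code, in the run of $q$ on a concrete $M$, executions of a non-header $bb$ correspond one-to-one to matches of $\psi_{bb}$, and executions of a loop header $bb$ to matches of $\psi_{bb}$ plus matches of $\psi'_{bb}$. For concrete $M$, $\mathcal{S}_{\mathrm{flow}}(M)$ contains for each $bb$: $\sum_{e=\langle n_1,n_2\rangle\in E,\mathit{tr}(n_1)=bb}f(e)=M\#\psi_{bb}+M\#\psi'_{bb}$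 (loop header) or $=M\#\psi_{bb}$ (otherwise). Witness generation. Given $P=\langle O_P,I_P,\mathcal{S}_P\rangle$ and $\mathcal{T}=\langle\Phi,r\rangle$ (with the range of $f$ disjoint from the range of $r$ and from the variables of $\mathcal{S}_P$), extend $r$ to $r'$ on $\Phi\cup\Psi$ by assigning to each $\psi\in\Psi$ a fresh distinct variable (not in the range of $f$, of $r$, or in $\mathcal{S}_P$). $\mathcal{S}_{\mathrm{merge}}$ contains for each $bb$: $r'(\psi_{bb})+r'(\psi'_{bb})-\sum_{e=\langle n_1,n_2\rangle\in E,\mathit{tr}(n_1)=bb}f(e)=0$ if $bb$ is a loop header, else $r'(\psi_{bb})-\sum_{e=\langle n_1,n_2\rangle\in E,\mathit{tr}(n_1)=bb}f(e)=0$. Set $P'=\langle O_P,I_P,\mathcal{S}_P\cup\mathcal{S}_{\mathrm{IPET}}\cup\mathcal{S}_{\mathrm{merge}}\rangle$ and $\mathcal{T}'=\langle\Phi\cup\Psi,r'\rangle$. *)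

From HB Require Import structures.
From mathcomp Require Import all_boot all_order all_algebra.
From Stdlib Require List.
Unset Printing Implicit Defensive.
Import Order.TTheory GRing.Theory Num.Theory.
Local Open Scope ring_scope.

Definition Var := nat.
Definition valuation := Var -> int.

(* an inequality  sum_j a_j x_j <= y  : (list of (a_j, x_j), y) *)
Definition ineq := (seq (int * Var) * int)%type.
Definition system := seq ineq.

Definition lhs (k : valuation) (ts : seq (int * Var)) : int :=
  \sum_(t <- ts) t.1 * k t.2.

Definition sat_ineq (k : valuation) (c : ineq) : Prop := lhs k c.1 <= c.2.
Definition sat (k : valuation) (S : system) : Prop :=
  forall c, c \in S -> sat_ineq k c.
Definition entails (S1 S2 : system) : Prop :=
  forall k, sat k S1 -> sat k S2.
Definition solvable (S : system) : Prop := exists k, sat k S.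

Definition negterms (ts : seq (int * Var)) : seq (int * Var) :=
  [seq (- t.1, t.2) | t <- ts].
Definition eqn (ts : seq (int * Var)) (c : int) : system :=
  [:: (ts, c); (negterms ts, - c)].

Definition ineq_vars (c : ineq) : seq Var := [seq t.2 | t <- c.1].
Definition sys_vars (S : system) : seq Var := flatten [seq ineq_vars c | c <- S].

Definition rename_sys (rn : Var -> Var) (S : system) : system :=
  [seq ([seq (t.1, rn t.2) | t <- c.1], c.2) | c <- S].

Definition is_max (S : system) (g : valuation -> int) (v : int) : Prop :=
  (exists k, sat k S /\ g k = v) /\ (forall k, sat k S -> g k <= v).

Inductive V3 := V0 | V1 | Vhalf.   (* 0, 1, 1/2 (unknown) *)

Definition isV1 (x : V3) : bool := if x is V1 then true else false.

Section Models.
(* signature: class symbols C (unary), relation symbols R (binary);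
   the existence symbol eps and equality symbol ~ are built in *)
Context {C R : Type}.

Record pmodel := PModel {
  obj  : finType;
  Icls : C -> obj -> V3;
  Irel : R -> obj -> obj -> V3;
  Iex  : obj -> V3;
  Ieq  : obj -> obj -> V3;
  scope : system
}.

Definition info_le (a b : V3) : Prop := a = Vhalf \/ a = b.

Definition refines_by (P Q : pmodel) (abs : obj Q -> obj P) : Prop :=
  [/\ (forall c q, info_le (Icls P c (abs q)) (Icls Q c q)),
      (forall r q1 q2, info_le (Irel P r (abs q1) (abs q2)) (Irel Q r q1 q2)),
      (forall q, info_le (Iex P (abs q)) (Iex Q q)),
      (forall q1 q2, info_le (Ieq P (abs q1) (abs q2)) (Ieq Q q1 q2)) &
      (forall p, Iex P p = V1 -> exists q, abs q = p)]
  /\ entails (scope Q) (scope P).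

Definition refines (P Q : pmodel) : Prop := exists abs, refines_by P Q abs.

Definition concrete (P : pmodel) : Prop :=
  [/\ (forall c o, Icls P c o <> Vhalf),
      (forall r o1 o2, Irel P r o1 o2 <> Vhalf),
      (forall o, Iex P o = V1),
      (forall o1 o2, Ieq P o1 o2 = (if o1 == o2 then V1 else V0)) &
      solvable (scope P)].

Inductive form :=
  | FTrue
  | FCls of C & nat
  | FRel of R & nat & nat
  | FEx of nat
  | FEq of nat & nat
  | FNot of form
  | FAnd of form & form
  | FOr of form & form
  | FExists of nat & form
  | FForall of nat & form.

(* a predicate with free variables v_0, ..., v_(nvars-1) *)
Record pred_fo := Pred { nvars : nat; body : form }.

Definition upd {T : Type} (e : nat -> option T) (v : nat) (o : T) :=
  fun i => if i == v then Some o else e i.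

(* truth of a formula in (the concrete reading of) a model *)
Fixpoint eval {M : pmodel} (e : nat -> option (obj M)) (phi : form) : bool :=
  match phi with
  | FTrue => true
  | FCls c v => if e v is Some o then isV1 (Icls M c o) else false
  | FRel r v w => if e v is Some o1 then if e w is Some o2
                  then isV1 (Irel M r o1 o2) else false else false
  | FEx v => if e v is Some o then isV1 (Iex M o) else false
  | FEq v w => if e v is Some o1 then if e w is Some o2
               then isV1 (Ieq M o1 o2) else false else false
  | FNot p => ~~ eval e p
  | FAnd p q => eval e p && eval e q
  | FOr p q => eval e p || eval e q
  | FExists v p => [exists o : obj M, eval (upd e v o) p]
  | FForall v p => [forall o : obj M, eval (upd e v o) p]
  end.

Definition env_of {M : pmodel} {n : nat} (Z : {ffun 'I_n -> obj M})
  : nat -> option (obj M) := fun i => omap Z (insub i).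

Definition count (M : pmodel) (phi : pred_fo) : nat :=
  #|[set Z : {ffun 'I_(nvars phi) -> obj M} | eval (env_of Z) (body phi)]|.

(* theories: a finite family of predicates with their variables r(phi) *)
Definition theory := seq (pred_fo * Var).
Definition theory_vars (T : theory) : seq Var := [seq x.2 | x <- T].

Definition compatible (M : pmodel) (T : theory) : Prop :=
  forall x, List.In x T ->
    entails (scope M) (eqn [:: (1, x.2)] (count M x.1)%:Z).

Definition solution (P : pmodel) (T : theory) (M : pmodel) : Prop :=
  [/\ concrete M, refines P M & compatible M T].

Definition renaming (rn : Var -> Var) : Prop := bijective rn.
Definition stationary (rn : Var -> Var) (T : theory) : Prop :=
  forall x, List.In x T -> rn x.2 = x.2.
Definition rename_model (P : pmodel) (rn : Var -> Var) : pmodel :=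
  @PModel (obj P) (Icls P) (Irel P) (Iex P) (Ieq P) (rename_sys rn (scope P)).

Definition with_scope (P : pmodel) (S : system) : pmodel :=
  @PModel (obj P) (Icls P) (Irel P) (Iex P) (Ieq P) S.

Section IPET.
Context {BB V : finType}.
Variables (header : pred BB)
          (psi psi' : BB -> pred_fo).
Variables (E : {set V * V}) (s t : V) (w : V * V -> nat) (tr : V -> BB)
          (f : V * V -> Var).

Definition esum (p : V * V -> bool) : seq (int * Var) :=
  [seq (1, f e) | e <- enum E & p e].

Definition IPET_base : system :=
  eqn (esum (fun e => e.1 == s)) 1 ++
  eqn (esum (fun e => e.2 == t)) 1 ++
  flatten [seq eqn (esum (fun e => e.2 == n) ++ negterms (esum (fun e => e.1 == n))) 0
          | n <- enum V & (n != s) && (n != t)] ++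
  [seq ([:: (-1, f e)], 0) | e <- enum E].

Definition g_IPET (k : valuation) : int := \sum_(e in E) (w e)%:Z * k (f e).

Definition out_bb (bb : BB) : seq (int * Var) := esum (fun e => tr e.1 == bb).

Definition bb_count (N : pmodel) (bb : BB) : nat :=
  if header bb then count N (psi bb) + count N (psi' bb) else count N (psi bb).

Definition S_flow (N : pmodel) : system :=
  flatten [seq eqn (out_bb bb) (bb_count N bb)%:Z | bb <- enum BB].

Definition k_path (pi : seq (V * V)) : valuation :=
  fun x => (count_mem true [seq (e \in E) && (f e == x) | e <- pi])%:Z.

Variables (rpsi rpsi' : BB -> Var).

Definition S_merge : system :=
  flatten [seq (if header bb
                then eqn ((1, rpsi bb) :: (1, rpsi' bb) :: negterms (out_bb bb)) 0
                else eqn ((1, rpsi bb) :: negterms (out_bb bb)) 0)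
          | bb <- enum BB].

Definition theory' (T : theory) : theory :=
  T ++ [seq (psi bb, rpsi bb) | bb <- enum BB]
    ++ [seq (psi' bb, rpsi' bb) | bb <- enum BB & header bb].

Definition model' (S_IPET : system) (P : pmodel) : pmodel :=
  with_scope P (scope P ++ S_IPET ++ S_merge).

End IPET.
End Models.

(** The witness M' keeps the objects and interpretation of M; its scope is
    the scope of M with its variables renamed away from the edge variables and
    the fresh variables r'(psi) (fixing those of T and of S_P), together with
    S_IPET, S_merge, S_flow(M) and the equations r'(psi) = M # psi.  As M' has
    the objects of M, S_flow(M') = S_flow(M), and every solution of
    S_IPET + S_flow(M) extends to a solution of the new scope agreeing with it
    on the edge variables; since g_IPET only reads edge variables, the three
    maxima coincide.  The maximum exists because the IPET constraints make the
    edge counts nonnegative, so g_IPET is bounded by the flow counts. *)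

From Pilot Require Import Defs.
From mathcomp Require Import all_boot all_order all_algebra.
From mathcomp Require Import zify.
From Stdlib Require Import Classical.
From Stdlib Require List.
Import Order.TTheory GRing.Theory Num.Theory.

(* Swap the i-th element of [undup A] with [N + i], where [N] exceeds every
   element of [A ++ L]. *)
Lemma exists_involution_avoiding (A L : seq nat) :
  exists rn : nat -> nat,
    [/\ involutive rn,
        forall x, x \in L -> x \notin A -> rn x = x &
        forall x, x \in L -> rn x \notin A].
Proof.
pose A' := undup A; pose N := (\max_(x <- A ++ L) x).+1.
have ltN x : x \in A ++ L -> x < N.
  by move=> hx; rewrite ltnS; exact: (leq_bigmax_seq _ hx).
have A_ltN x : x \in A -> x < N by move=> hx; apply: ltN; rewrite mem_cat hx.
have L_ltN x : x \in L -> x < N by move=> hx; apply: ltN; rewrite mem_cat hx orbT.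
have notA y : N <= y -> y \notin A by move=> hy; apply/negP => /A_ltN; lia.
pose rn x := if x \in A' then N + index x A'
             else if N <= x < N + size A' then nth 0 A' (x - N) else x.
have A'_notA y : N <= y -> (y \in A') = false.
  by move=> hy; rewrite mem_undup (negbTE (notA y hy)).
exists rn; split.
- move=> x; case xA: (x \in A').
  + rewrite {2}/rn xA /rn A'_notA ?leq_addr //.
    by rewrite ltn_add2l index_mem xA addKn nth_index.
  + case xB: (N <= x < N + size A'); last by rewrite /rn xA xB xA xB.
    have nthA : nth 0 A' (x - N) \in A' by apply: mem_nth; lia.
    by rewrite {2}/rn xA xB /rn nthA index_uniq ?undup_uniq; lia.
- move=> x xL xA; rewrite /rn mem_undup (negbTE xA).
  by have := L_ltN x xL; case: ifP => //; lia.
- move=> x xL; rewrite /rn; case: ifP => [_ | xA]; first exact: notA (leq_addr _ _).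
  by have := L_ltN x xL; case: ifP => [|_ _]; [lia | rewrite -mem_undup xA].
Qed.

Local Open Scope ring_scope.

Lemma InP (X : eqType) (x : X) (s : seq X) : reflect (List.In x s) (x \in s).
Proof.
elim: s => [|y s IH] /=; first by constructor.
rewrite inE; apply: (iffP orP) => [[/eqP -> | /IH] | [-> | /IH]]; auto.
Qed.

Lemma int_bounded_max {Q : int -> Prop} {B v0 : int} :
  Q v0 -> (forall v, Q v -> v <= B) -> exists2 m, Q m & forall v, Q v -> v <= m.
Proof.
move=> Qv0 leB; have [d] : exists d : nat, B - v0 <= d%:Z.
  by exists `|B - v0|%N; rewrite abszE ler_norm.
elim: d v0 Qv0 => [|d IH] v0 Qv0 hd.
  by exists v0 => // v /leB; lia.
have [[v [Qv ltv]] | none] := classic (exists v, Q v /\ v0 < v).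
  by apply: (IH v Qv); lia.
exists v0 => // v Qv; rewrite leNgt; apply/negP => ltv; apply: none; by exists v.
Qed.

Section LinearSystems.

Implicit Types (k : valuation) (ts : seq (int * Var)) (S : system).

Lemma lhs_cons k t ts : lhs k (t :: ts) = t.1 * k t.2 + lhs k ts.
Proof. by rewrite /lhs big_cons. Qed.

Lemma lhs_var k x : lhs k [:: (1, x)] = k x.
Proof. by rewrite /lhs big_seq1 mul1r. Qed.

Lemma lhs_negterms k ts : lhs k (negterms ts) = - lhs k ts.
Proof. by rewrite /lhs big_map -sumrN; apply: eq_bigr => t _; rewrite mulNr. Qed.

Lemma eq_lhs k1 k2 ts :
  {in [seq t.2 | t <- ts], k1 =1 k2} -> lhs k1 ts = lhs k2 ts.
Proof.
move=> k12; rewrite /lhs big_seq [RHS]big_seq; apply: eq_bigr => t ht.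
by rewrite k12 // map_f.
Qed.

Lemma sat_eqn k ts c : sat k (Defs.eqn ts c) <-> lhs k ts = c.
Proof.
split=> [hk | <- c']; last first.
  by rewrite !inE => /orP [] /eqP ->; rewrite /sat_ineq /= ?lhs_negterms.
have /= le_c := hk _ (mem_head _ _).
have /= := hk (negterms ts, - c); rewrite !inE eqxx orbT => /(_ isT).
by rewrite /sat_ineq lhs_negterms lerN2 => ge_c; apply/eqP; rewrite eq_le le_c ge_c.
Qed.

Lemma sat_cat k S1 S2 : sat k (S1 ++ S2) <-> sat k S1 /\ sat k S2.
Proof.
split=> [hk | [h1 h2] c]; last by rewrite mem_cat => /orP [/h1 | /h2].
by split=> c hc; apply: hk; rewrite mem_cat hc ?orbT.
Qed.

Lemma sat_flatten (X : Type) k (F : X -> system) (s : seq X) :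
  sat k (flatten [seq F x | x <- s]) <-> forall x, List.In x s -> sat k (F x).
Proof.
elim: s => [|y s IH] /=; first by split=> // _ c.
rewrite sat_cat IH; split=> [[hy hs] x [<- | /hs] // | h].
by split=> [|x hx]; apply: h; [left | right].
Qed.

Lemma entails_sub {S1 S2} : {subset S2 <= S1} -> entails S1 S2.
Proof. by move=> sub k hk c /sub; apply: hk. Qed.

Lemma eq_in_sat {k1 k2 S} : {in sys_vars S, k1 =1 k2} -> sat k1 S -> sat k2 S.
Proof.
move=> k12 hk c hc; have := hk c hc; rewrite /sat_ineq (@eq_lhs k1 k2) // => x hx.
by apply: k12; apply/flattenP; exists (ineq_vars c); rewrite ?map_f.
Qed.

Lemma sat_rename k rn S : sat k (rename_sys rn S) <-> sat (k \o rn) S.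
Proof.
have lhs_rn c : lhs k [seq (t.1, rn t.2) | t <- c.1] = lhs (k \o rn) c.1.
  by rewrite /lhs big_map.
split=> [hk c hc | hk _ /mapP [c hc ->]]; last by rewrite /sat_ineq /= lhs_rn; apply: hk.
by have := hk _ (map_f (fun c : ineq => ([seq (t.1, rn t.2) | t <- c.1], c.2)) hc);
  rewrite /sat_ineq /= lhs_rn.
Qed.

Lemma is_max_exists {S} {g : valuation -> int} :
  solvable S -> (exists B, forall k, sat k S -> g k <= B) -> exists v, is_max S g v.
Proof.
case=> k0 hk0 [B leB]; pose Q v := exists k, sat k S /\ g k = v.
have Q0 : Q (g k0) by exists k0.
have QB v : Q v -> v <= B by case=> k [hk <-]; apply: leB.
have [_ [k [hk <-]] maxv] := int_bounded_max Q0 QB.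
by exists (g k); split=> [|k' hk']; [exists k | apply: maxv; exists k'].
Qed.

Lemma is_max_transfer {S1 S2} {g : valuation -> int} {v} :
  entails S2 S1 -> (forall k, sat k S1 -> exists2 k', sat k' S2 & g k' = g k) ->
  is_max S1 g v -> is_max S2 g v.
Proof.
move=> S21 S12 [[k [hk <-]] maxv]; split=> [|k' /S21 /maxv //].
by have [k' hk' gk'] := S12 k hk; exists k'.
Qed.

End LinearSystems.

Lemma exists_valuation_update {I : finType} (D : {pred I}) (r : I -> Var)
    (c : I -> int) (k : valuation) :
  {in D &, injective r} ->
  exists2 k' : valuation,
    forall x, x \notin [seq r i | i in D] -> k' x = k x &
    {in D, forall i, k' (r i) = c i}.
Proof.
move=> r_inj; exists (fun x => if [pick i in D | r i == x] is Some i then c i else k x).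
  by move=> x hx; case: pickP => // i /andP [hi /eqP rix]; move: hx; rewrite -rix image_f.
move=> i hi; case: pickP => [j /andP [hj /eqP /(r_inj _ _ hj hi) -> //] | /(_ i)].
by rewrite hi eqxx.
Qed.

Section Models.

Context {C R : Type}.
Implicit Types (M N P Q : @pmodel C R) (T : @theory C R) (S : system).

Lemma In_theory_vars T x : List.In x T -> x.2 \in theory_vars T.
Proof. by elim: T => //= y T IH [-> | /IH]; rewrite inE ?eqxx // => ->; rewrite orbT. Qed.

Lemma eval_with_scope M S e (phi : @Defs.form C R) :
  eval (M := with_scope M S) e phi = eval (M := M) e phi.
Proof.
elim: phi e => //= [p IH | p IHp q IHq | p IHp q IHq | v p IH | v p IH] e.
- by rewrite IH.
- by rewrite IHp IHq.
- by rewrite IHp IHq.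
- by apply: eq_existsb => o; rewrite IH.
- by apply: eq_forallb => o; rewrite IH.
Qed.

Lemma count_with_scope M S phi : Defs.count (with_scope M S) phi = Defs.count M phi.
Proof. by apply: eq_card => Z; rewrite !inE eval_with_scope. Qed.

Lemma concrete_with_scope {M S} : concrete M -> solvable S -> concrete (with_scope M S).
Proof. by case. Qed.

Lemma refines_by_id M : refines_by M M id.
Proof. by split=> //; split=> [c q | r q1 q2 | q | q1 q2 | p _]; [right..| exists p]. Qed.

Lemma refines_by_with_scope {P Q abs SP SQ} :
  refines_by P Q abs -> entails SQ SP ->
  refines_by (with_scope P SP) (with_scope Q SQ) abs.
Proof. by case. Qed.

Lemma refines_with_scope M {S1 S2} :
  entails S2 S1 -> refines (with_scope M S1) (with_scope M S2).
Proof. by exists id; apply: refines_by_with_scope (refines_by_id M) _. Qed.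

Definition theory_eqns M T : system :=
  flatten [seq Defs.eqn [:: (1, x.2)] (Defs.count M x.1)%:Z | x <- T].

Lemma sat_theory_eqns k M T :
  sat k (theory_eqns M T) <-> forall x, List.In x T -> k x.2 = (Defs.count M x.1)%:Z.
Proof.
rewrite /theory_eqns sat_flatten; split=> h x /h; rewrite sat_eqn lhs_var //.
Qed.

Lemma compatible_cat {N T1 T2} :
  compatible N T1 -> compatible N T2 -> compatible N (T1 ++ T2).
Proof. by move=> h1 h2 x /(List.in_app_or T1 T2 x) [/(h1 x) | /(h2 x)]. Qed.

Lemma compatible_entails {M S1 S2 T} :
  entails S2 S1 -> compatible (with_scope M S1) T -> compatible (with_scope M S2) T.
Proof.
by move=> S21 h x /h hx k /S21 /hx; rewrite !count_with_scope.
Qed.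

Lemma compatible_rename {M rn T} :
  stationary rn T -> compatible M T -> compatible (rename_model M rn) T.
Proof.
move=> rnT h x xT k /sat_rename /(h x xT); rewrite !sat_eqn !lhs_var /= (rnT x xT).
by rewrite (count_with_scope M).
Qed.

Lemma compatible_theory_eqns M T : compatible (with_scope M (theory_eqns M T)) T.
Proof.
move=> x xT k /sat_theory_eqns /(_ x xT) kx.
by rewrite sat_eqn lhs_var count_with_scope.
Qed.

End Models.

Section IPET.

Context {C R : Type} {BB V : finType} (E : {set V * V}) (f : V * V -> Var).
Implicit Types (k : valuation) (p : pred (V * V)).

Local Notation edge_vars := [seq f e | e in E].

Lemma lhs_esum k p : lhs k (esum E f p) = \sum_(e <- enum E | p e) k (f e).
Proof. by rewrite /lhs /esum big_map big_filter; apply: eq_bigr => e _; rewrite mul1r. Qed.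

Lemma eq_lhs_esum k1 k2 p :
  {in edge_vars, k1 =1 k2} -> lhs k1 (esum E f p) = lhs k2 (esum E f p).
Proof.
move=> k12; apply: eq_lhs => _ /mapP [_ /mapP [e + ->] ->].
by rewrite mem_filter mem_enum => /andP [_ eE]; apply/k12/image_f.
Qed.

Lemma le_lhs_esum k p e :
  (forall e, e \in E -> 0 <= k (f e)) -> e \in E -> p e -> k (f e) <= lhs k (esum E f p).
Proof.
move=> k_ge0 eE pe; rewrite lhs_esum -big_filter (bigD1_seq e) /=.
- rewrite lerDl big_seq_cond; apply: sumr_ge0 => e' /andP [e'E _]; apply: k_ge0.
  by move: e'E; rewrite mem_filter mem_enum => /andP [].
- by rewrite mem_filter pe mem_enum.
- exact/filter_uniq/enum_uniq.
Qed.

Lemma IPET_base_ge0 s t k :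
  sat k (IPET_base E s t f) -> forall e, e \in E -> 0 <= k (f e).
Proof.
move=> hk e eE; have := hk ([:: (-1, f e)], 0).
rewrite /IPET_base !mem_cat map_f ?orbT ?mem_enum // => /(_ isT).
by rewrite /sat_ineq /lhs big_seq1 /= mulN1r oppr_le0.
Qed.

Lemma eq_g_IPET w k1 k2 : {in edge_vars, k1 =1 k2} -> g_IPET E w f k1 = g_IPET E w f k2.
Proof. by move=> k12; apply: eq_bigr => e eE; rewrite k12 ?image_f. Qed.

Variables (header : pred BB) (psi psi' : BB -> @pred_fo C R) (tr : V -> BB).

Definition reserved_vars (rpsi rpsi' : BB -> Var) : seq Var :=
  edge_vars ++ [seq rpsi bb | bb in predT] ++ [seq rpsi' bb | bb in header].

Lemma notin_reserved_vars rpsi rpsi' (X : seq Var) :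
  (forall e, e \in E -> f e \notin X) -> (forall bb, rpsi bb \notin X) ->
  (forall bb, header bb -> rpsi' bb \notin X) ->
  {in X, forall x, x \notin reserved_vars rpsi rpsi'}.
Proof.
move=> fX rX r'X x xX; rewrite !mem_cat !negb_or; apply/and3P; split.
- by apply/imageP => -[e eE xe]; move: (fX e eE); rewrite -xe xX.
- by apply/imageP => -[bb _ xb]; move: (rX bb); rewrite -xb xX.
- by apply/imageP => -[bb hb xb]; move: (r'X bb hb); rewrite -xb xX.
Qed.

Lemma sat_S_flow k N :
  sat k (S_flow header psi psi' E tr f N) <->
  forall bb, lhs k (out_bb E tr f bb) = (bb_count header psi psi' N bb)%:Z.
Proof.
rewrite /S_flow sat_flatten; split=> h bb; last by move=> _; apply/sat_eqn/h.
by apply/sat_eqn/h/InP; rewrite mem_enum.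
Qed.

Lemma S_flow_with_scope N S :
  S_flow header psi psi' E tr f (with_scope N S) = S_flow header psi psi' E tr f N.
Proof.
by rewrite /S_flow /bb_count; congr flatten; apply: eq_map => bb; rewrite !count_with_scope.
Qed.

Lemma g_IPET_le_flow w s t N k :
  sat k (IPET_base E s t f) -> sat k (S_flow header psi psi' E tr f N) ->
  g_IPET E w f k <= \sum_(e in E) (w e)%:Z * (bb_count header psi psi' N (tr e.1))%:Z.
Proof.
move=> /IPET_base_ge0 k_ge0 /sat_S_flow k_flow; apply: ler_sum => e eE.
by rewrite ler_wpM2l // -k_flow; apply: le_lhs_esum; rewrite ?eqxx.
Qed.

Lemma sat_S_merge k rpsi rpsi' :
  sat k (S_merge header E tr f rpsi rpsi') <->
  forall bb, lhs k (out_bb E tr f bb) =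
             k (rpsi bb) + (if header bb then k (rpsi' bb) else 0).
Proof.
have merge_bb bb : sat k (if header bb
    then Defs.eqn ((1, rpsi bb) :: (1, rpsi' bb) :: negterms (out_bb E tr f bb)) 0
    else Defs.eqn ((1, rpsi bb) :: negterms (out_bb E tr f bb)) 0) <->
  lhs k (out_bb E tr f bb) = k (rpsi bb) + (if header bb then k (rpsi' bb) else 0).
  by case: (header bb); rewrite sat_eqn !lhs_cons lhs_negterms /= !mul1r; split; lia.
rewrite /S_merge sat_flatten; split=> h bb; last by move=> _; apply/merge_bb/h.
by apply/merge_bb/h/InP; rewrite mem_enum.
Qed.

End IPET.

Section Witness.

Context {C R : Type} {BB V : finType} {header : pred BB}
  {psi psi' : BB -> @pred_fo C R} {E : {set V * V}} {tr : V -> BB}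
  {f : V * V -> Var} {S_IPET : system} {rpsi rpsi' : BB -> Var}
  {P M : @pmodel C R} {T : @theory C R} {rn : Var -> Var}.

Local Notation edge_vars := [seq f e | e in E].
Local Notation S_flow N := (S_flow header psi psi' E tr f N).

Hypothesis IPET_vars : {subset sys_vars S_IPET <= edge_vars}.
Hypothesis rpsi_notin_edges : forall bb, rpsi bb \notin edge_vars.
Hypothesis rpsi'_notin_edges : forall bb, header bb -> rpsi' bb \notin edge_vars.
Hypothesis rpsi_inj : injective rpsi.
Hypothesis rpsi'_inj : {in header &, injective rpsi'}.
Hypothesis rpsi_neq_rpsi' : forall bb1 bb2, header bb2 -> rpsi bb1 <> rpsi' bb2.
Hypothesis M_concrete : concrete M.
Hypothesis rn_involutive : involutive rn.
Hypothesis rn_scope_M :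
  {in sys_vars (scope M), forall x, rn x \notin reserved_vars E f header rpsi rpsi'}.
Hypothesis M_refines : refines P M.
Hypothesis M_compatible : compatible M T.
Hypothesis rn_fixes_P : {in sys_vars (scope P), rn =1 id}.
Hypothesis rn_stationary : stationary rn T.

Definition fresh_theory : @theory C R :=
  [seq (psi bb, rpsi bb) | bb <- enum BB] ++
  [seq (psi' bb, rpsi' bb) | bb <- enum BB & header bb].

Definition witness_scope : system :=
  rename_sys rn (scope M) ++ S_IPET ++ S_merge header E tr f rpsi rpsi' ++
  S_flow M ++ theory_eqns M fresh_theory.

Lemma witness_valuation k :
  sat k (S_IPET ++ S_flow M) -> exists2 k', sat k' witness_scope & {in edge_vars, k' =1 k}.
Proof.
case/sat_cat => k_IPET /sat_S_flow k_flow.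
have [k0 k0_M] : solvable (scope M) by case: M_concrete.
pose kb x := if x \in edge_vars then k x else k0 (rn x).
have [k1 k1_out k1_rpsi'] :=
  exists_valuation_update header rpsi' (fun bb => (Defs.count M (psi' bb))%:Z) kb rpsi'_inj.
have [k' k'_out k'_rpsi] := exists_valuation_update predT rpsi
  (fun bb => (Defs.count M (psi bb))%:Z) k1 (in2W rpsi_inj).
have k'_rpsi' bb : header bb -> k' (rpsi' bb) = (Defs.count M (psi' bb))%:Z.
  move=> hb; rewrite k'_out ?k1_rpsi' //.
  by apply/imageP => -[bb' _ /esym]; apply: rpsi_neq_rpsi'.
have k'_edges : {in edge_vars, k' =1 k}.
  move=> x xE; rewrite k'_out ?k1_out /kb ?xE //.
    by apply/imageP => -[bb hb xb]; move: (rpsi'_notin_edges bb hb); rewrite -xb xE.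
  by apply/imageP => -[bb _ xb]; move: (rpsi_notin_edges bb); rewrite -xb xE.
have k'_free x : x \notin reserved_vars E f header rpsi rpsi' -> k' x = k0 (rn x).
  rewrite !mem_cat !negb_or => /and3P [xE xr xr'].
  by rewrite k'_out // k1_out // /kb (negbTE xE).
have out_k' bb : lhs k' (out_bb E tr f bb) = lhs k (out_bb E tr f bb).
  exact: eq_lhs_esum.
exists k' => //; rewrite !sat_cat; split; [|split; [|split; [|split]]].
- apply/sat_rename; apply: eq_in_sat k0_M => y yM /=.
  by rewrite k'_free ?rn_involutive //; apply: rn_scope_M.
- by apply: eq_in_sat k_IPET => y /IPET_vars /k'_edges.
- apply/sat_S_merge => bb; rewrite out_k' k_flow k'_rpsi // /bb_count.
  by case: ifP => hb; rewrite ?k'_rpsi' // ?PoszD ?addr0.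
- by apply/sat_S_flow => bb; rewrite out_k'.
- apply/sat_theory_eqns => x /(List.in_app_or _ _ x) [] /List.in_map_iff [bb [<- bbB]] /=.
  + exact: k'_rpsi.
  + by apply: k'_rpsi'; move/InP: bbB; rewrite mem_filter => /andP [].
Qed.

Local Notation witness := (with_scope M witness_scope).

Lemma witness_solution :
  solvable (S_IPET ++ S_flow M) ->
  solution (model' header E tr f rpsi rpsi' S_IPET P)
           (theory' header psi psi' rpsi rpsi' T) witness.
Proof.
case=> k0 /witness_valuation [k' k'_sat _]; have [abs M_ref] := M_refines.
split.
- exact: concrete_with_scope (ex_intro _ k' k'_sat).
- exists abs; rewrite /model'; apply: (refines_by_with_scope M_ref).
  move=> k /sat_cat [/sat_rename k_M k_rest].
  rewrite sat_cat; split; last by move: k_rest; rewrite !sat_cat => -[? [? _]].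
  by apply: eq_in_sat (M_ref.2 _ k_M) => y /rn_fixes_P /= ->.
- apply: compatible_cat.
  + apply: compatible_entails (compatible_rename rn_stationary M_compatible).
    by apply: entails_sub => c c_rn; rewrite mem_cat c_rn.
  + apply: compatible_entails (compatible_theory_eqns M fresh_theory).
    by apply: entails_sub => c c_eqns; rewrite !mem_cat c_eqns !orbT.
Qed.

Lemma witness_refines : refines (rename_model M rn) witness.
Proof. by apply/refines_with_scope/entails_sub => c c_rn; rewrite mem_cat c_rn. Qed.

Lemma witness_is_max w v :
  is_max (S_IPET ++ S_flow M) (g_IPET E w f) v -> is_max witness_scope (g_IPET E w f) v.
Proof.
apply: is_max_transfer.
  move=> k /sat_cat [_ /sat_cat [k_IPET /sat_cat [_ /sat_cat [k_flow _]]]].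
  exact/sat_cat.
move=> k /witness_valuation [k' k'_sat k'_k]; exists k' => //; exact: eq_g_IPET.
Qed.

Lemma exists_witness w v :
  is_max (S_IPET ++ S_flow M) (g_IPET E w f) v ->
  exists M' : @pmodel C R,
    [/\ solution (model' header E tr f rpsi rpsi' S_IPET P)
                 (theory' header psi psi' rpsi rpsi' T) M',
        refines (rename_model M rn) M',
        is_max (S_IPET ++ S_flow M') (g_IPET E w f) v &
        is_max (scope M') (g_IPET E w f) v].
Proof.
move=> max_v; have [[k [k_sat _]] _] := max_v.
exists witness; rewrite S_flow_with_scope; split=> //.
- exact: witness_solution (ex_intro _ k k_sat).
- exact: witness_refines.
- exact: witness_is_max.
Qed.

End Witness.

Theorem lemmaA5
  (C R : Type) (BB V : finType)
  (header : pred BB) (psi psi' : BB -> @pred_fo C R)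
  (E : {set V * V}) (s t : V) (w : V * V -> nat) (tr : V -> BB)
  (f : V * V -> Var) (S_IPET : system)
  (run : @pmodel C R -> seq (V * V))
  (P : @pmodel C R) (T : @theory C R) (rpsi rpsi' : BB -> Var)
  (M : @pmodel C R) :
  (* f assigns distinct variables to the edges *)
  {in E &, injective f} ->
  (* S_IPET contains the structural IPET constraints, and only speaks of
     edge variables *)
  {subset IPET_base E s t f <= S_IPET} ->
  {subset sys_vars S_IPET <= [seq f e | e in E]} ->
  (* standing assumptions: the run of q on a concrete model follows a CFG
     path pi with k_pi |= S_IPET (IPET safety) and block executions counted
     by matches of psi_bb (+ psi'_bb for loop headers) *)
  (forall N : @pmodel C R, concrete N ->
     sat (k_path E f (run N)) (S_IPET ++ S_flow header psi psi' E tr f N)) ->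
  (* range f disjoint from range r and from the variables of S_P *)
  (forall e, e \in E -> f e \notin theory_vars T) ->
  (forall e, e \in E -> f e \notin sys_vars (scope P)) ->
  (* fresh distinct variables r'(psi) *)
  (forall bb, rpsi bb \notin [seq f e | e in E]) ->
  (forall bb, header bb -> rpsi' bb \notin [seq f e | e in E]) ->
  (forall bb, rpsi bb \notin theory_vars T) ->
  (forall bb, header bb -> rpsi' bb \notin theory_vars T) ->
  (forall bb, rpsi bb \notin sys_vars (scope P)) ->
  (forall bb, header bb -> rpsi' bb \notin sys_vars (scope P)) ->
  injective rpsi ->
  {in header &, injective rpsi'} ->
  (forall bb1 bb2, header bb2 -> rpsi bb1 <> rpsi' bb2) ->
  (* M in solutions(P, T) *)
  solution P T M ->
  exists rn : Var -> Var,
    [/\ renaming rn, stationary rn T &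
    exists M' : @pmodel C R,
      [/\ solution (model' header E tr f rpsi rpsi' S_IPET P)
                   (theory' header psi psi' rpsi rpsi' T) M',
          refines (rename_model M rn) M' &
          exists v : int,
            [/\ is_max (S_IPET ++ S_flow header psi psi' E tr f M) (g_IPET E w f) v,
                is_max (S_IPET ++ S_flow header psi psi' E tr f M') (g_IPET E w f) v &
                is_max (scope M') (g_IPET E w f) v]]].
Proof.
move=> _ base_sub IPET_vars run_safe fT fP rpsiE rpsi'E rpsiT rpsi'T rpsiP rpsi'P
  rpsi_inj rpsi'_inj rpsi_neq [M_conc M_ref M_comp].
have [rn [rn_inv rn_fix rn_avoid]] := exists_involution_avoiding
  (reserved_vars E f header rpsi rpsi')
  (sys_vars (scope M) ++ sys_vars (scope P) ++ theory_vars T).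
have rn_T : stationary rn T.
  move=> x /In_theory_vars xT; apply: rn_fix; first by rewrite !mem_cat xT !orbT.
  exact: notin_reserved_vars fT rpsiT rpsi'T _ xT.
have rn_P : {in sys_vars (scope P), rn =1 id}.
  move=> y yP; apply: rn_fix; first by rewrite !mem_cat yP !orbT.
  exact: notin_reserved_vars fP rpsiP rpsi'P _ yP.
have rn_M :
    {in sys_vars (scope M), forall x, rn x \notin reserved_vars E f header rpsi rpsi'}.
  by move=> x xM; apply: rn_avoid; rewrite mem_cat xM.
have [v max_v] :
    exists v, is_max (S_IPET ++ S_flow header psi psi' E tr f M) (g_IPET E w f) v.
  apply: is_max_exists; first by exists (k_path E f (run M)); apply: run_safe.
  eexists => k /sat_cat [k_IPET k_flow].
  exact: g_IPET_le_flow (entails_sub base_sub k k_IPET) k_flow.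
have [M' [M'_sol M'_ref M'_flow M'_max]] := exists_witness IPET_vars rpsiE rpsi'E
  rpsi_inj rpsi'_inj rpsi_neq M_conc rn_inv rn_M M_ref M_comp rn_P rn_T w v max_v.
exists rn; split; [exact: inv_bij | exact: rn_T | exists M'; split=> //].
by exists v.
Qed.
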